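(* Let $\mathcal M=(S,A,P,R)$ be an MDP with rewards, $\mathrm{Bad}\subset S$ a set of sink states, $s_0\in S$ with $\mathrm{Val}(s_0)>0$, and $\mathcal M'$ the pruned MDP. Let $\sigma^*$ be a strategy of $\mathcal M'$ maximizing $\mathbb E'_{\sigma,s_0}(\mathsf{MP})$ over all strategies $\sigma$ of $\mathcal M'$. Then (1) $\Pr_{\sigma^*,s_0}(\Box\neg\mathrm{Bad})=\mathrm{Val}(s_0)$, and (2) $\mathbb E_{\sigma^*,s_0}(\mathsf{MP}\mid\Box\neg\mathrm{Bad})=\max_{\sigma\in\Sigma_{\mathcal M,s_0}(\Box\neg\mathrm{Bad})}\mathbb E_{\sigma,s_0}(\mathsf{MP}\mid\Box\neg\mathrm{Bad})$.
   Context: An MDP with rewards is $\mathcal M=(S,A,P,R)$ with $S,A$ finite, $P$ a partial map $S\times A\to\mathrm{Dist}(S)$ and $R:S\times A\to\mathbb R$; $a$ is legal at $s$ if $P(s,a)$ is defined; $P(s,a,s')=P(s,a)(s')$. A strategy maps finite paths to distributions over legal actions at the last state (history-dependent, randomized); $\Pr_{\sigma,s}$, $\mathbb E_{\sigma,s}$ are the induced probability measure and expectation on infinite paths from $s$. States in $\mathrm{Bad}$ are sinks (single legal action, self-loop with probability 1); $\Box\neg\mathrm{Bad}$ is the event of never visiting $\mathrm{Bad}$; $\mathrm{Val}(s)=\max_\sigma\Pr_{\sigma,s}(\Box\neg\mathrm{Bad})$; $\Sigma_{\mathcal M,s}(\Box\neg\mathrm{Bad})$ is the set of strategies attaining $\mathrm{Val}(s)$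 from $s$. For a path $s_0a_0s_1a_1\dots$, $\mathrm{Reward}_n=\sum_{i=0}^{n-1}R(s_i,a_i)$. $\mathbb E_{\sigma,s}(\mathsf{MP}\mid\Box\neg\mathrm{Bad})=\liminf_{n\to\infty}\frac1n\mathbb E_{\sigma,s}(\mathrm{Reward}_n\cdot\mathbf 1_{\Box\neg\mathrm{Bad}})/\Pr_{\sigma,s}(\Box\neg\mathrm{Bad})$, and in any MDP $\mathbb E_{\sigma,s}(\mathsf{MP})=\liminf_{n\to\infty}\frac1n\mathbb E_{\sigma,s}(\mathrm{Reward}_n)$. $\mathrm{Opt}_{\mathcal M}=\{(s,a): a\text{ legal at }s,\ \mathrm{Val}(s)=\sum_{s'}P(s,a,s')\mathrm{Val}(s')\}$. The pruned MDP $\mathcal M'=(S',A,P',R')$ has $S'=\{s:\mathrm{Val}(s)>0\}$, $R'=R$ restricted to $S'$, and $P'(s,a,s')=P(s,a,s')\mathrm{Val}(s')/\mathrm{Val}(s)$ if $s\in S'$ and $(s,a)\in\mathrm{Opt}_{\mathcal M}$ (undefined otherwise). Strategies of $\mathcal M'$ are identified with strategies of $\mathcal M$ that after every finite path $\rho$ only play actions $a$ with $(\mathrm{last}(\rho),a)\in\mathrm{Opt}_{\mathcal M}$; $\mathbb E'_{\sigma,s}$ is the expectation in $\mathcal M'$ (with rewards $R'$). *)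

From HB Require Import structures.
From mathcomp Require Import all_boot all_order all_algebra.
From mathcomp Require Import all_classical all_reals.
From mathcomp Require Import topology normedtype sequences.
Set Implicit Arguments.
Unset Strict Implicit.
Unset Printing Implicit Defensive.
Import Order.TTheory GRing.Theory Num.Theory.
Import numFieldNormedType.Exports.
Local Open Scope ring_scope.
Local Open Scope classical_set_scope.

(* P is a partial map S x A -> Dist(S): [None] = undefined (illegal action). *)
Record mdp (R : realType) (S A : finType) := MDP {
  trans : S -> A -> option {ffun S -> R};
  trans_dist : forall s a mu, trans s a = Some mu ->
      (forall s', 0 <= mu s') /\ \sum_(s' : S) mu s' = 1;
  rew : S -> A -> R
}.

Section Defs.
Variables (R : realType) (S A : finType).

Definition legal (M : mdp R S A) (s : S) (a : A) : bool :=
  if trans M s a is Some _ then true else false.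

Definition tp (M : mdp R S A) (s : S) (a : A) (s' : S) : R :=
  if trans M s a is Some mu then mu s' else 0.

(* A finite path s0 a0 s1 ... a_{n-1} s_n is represented by its first state
   s0 and the list [(a0,s1); ...; (a_{n-1},s_n)]. *)
Definition last_state (s0 : S) (h : seq (A * S)) : S := last s0 (unzip2 h).

Fixpoint valid_path (M : mdp R S A) (s : S) (h : seq (A * S)) : bool :=
  if h is (a, s') :: h' then [&& legal M s a, 0 < tp M s a s' & valid_path M s' h']
  else true.

(* A (history-dependent, randomized) strategy: first state -> history ->
   action -> probability. *)
Definition strategy := S -> seq (A * S) -> A -> R.

Definition is_strategy (M : mdp R S A) (sigma : strategy) : Prop :=
  forall s0 h, valid_path M s0 h ->
    (forall a, 0 <= sigma s0 h a) /\
    (\sum_(a : A) sigma s0 h a = 1) /\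
    (forall a, 0 < sigma s0 h a -> legal M (last_state s0 h) a).

(* Probability, under sigma started in s0, of the cylinder of the finite path
   continuing history [pre] (current state [cur]) with the steps [l],
   for a transition function [P : S -> A -> S -> R]. *)
Fixpoint cylprob (P : S -> A -> S -> R) (sigma : strategy) (s0 : S)
    (pre : seq (A * S)) (cur : S) (l : seq (A * S)) : R :=
  if l is (a, s') :: l' then
    sigma s0 pre a * P cur a s' * cylprob P sigma s0 (rcons pre (a, s')) s' l'
  else 1.

Definition pathprob P sigma s0 (l : seq (A * S)) := cylprob P sigma s0 [::] s0 l.

Fixpoint reward_along (r : S -> A -> R) (s : S) (l : seq (A * S)) : R :=
  if l is (a, s') :: l' then r s a + reward_along r s' l' else 0.

Definition avoids (Bad : {set S}) (s0 : S) (l : seq (A * S)) : bool :=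
  (s0 \notin Bad) && all (fun p => p.2 \notin Bad) l.

Definition prob_safe_n (M : mdp R S A) Bad sigma s (n : nat) : R :=
  \sum_(t : n.-tuple (A * S)) pathprob (tp M) sigma s t * (avoids Bad s t)%:R.

(* Pr_{sigma,s}(Box not Bad) = lim_n Pr(no Bad within n steps)
   (continuity of the path measure from above on cylinder events) *)
Definition prob_safe (M : mdp R S A) Bad sigma s : R :=
  limn (prob_safe_n M Bad sigma s).

(* E_{sigma,s}(Reward_n * 1_{Box not Bad}) = lim_m E(Reward_n * 1_{no Bad within n+m steps}) *)
Definition exp_reward_safe (M : mdp R S A) Bad sigma s (n : nat) : R :=
  limn (fun m => \sum_(t : (n + m).-tuple (A * S))
          pathprob (tp M) sigma s t * reward_along (rew M) s (take n t)
            * (avoids Bad s t)%:R).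

Definition cond_MP (M : mdp R S A) Bad sigma s : R :=
  limn_inf (fun n => n%:R^-1 * exp_reward_safe M Bad sigma s n
                       / prob_safe M Bad sigma s).

Definition exp_reward (P : S -> A -> S -> R) (r : S -> A -> R) sigma s (n : nat) : R :=
  \sum_(t : n.-tuple (A * S)) pathprob P sigma s t * reward_along r s t.

Definition exp_MP (P : S -> A -> S -> R) (r : S -> A -> R) sigma s : R :=
  limn_inf (fun n => n%:R^-1 * exp_reward P r sigma s n).

Definition Val (M : mdp R S A) Bad (s : S) : R :=
  sup [set prob_safe M Bad sigma s | sigma in is_strategy M].

Definition opt_safe_strategies (M : mdp R S A) Bad (s : S) : set strategy :=
  [set sigma | is_strategy M sigma /\ prob_safe M Bad sigma s = Val M Bad s].

Definition Opt (M : mdp R S A) Bad (s : S) (a : A) : Prop :=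
  legal M s a /\ Val M Bad s = \sum_(s' : S) tp M s a s' * Val M Bad s'.

(* Transition probabilities P' of the pruned MDP M' (undefined, i.e. 0,
   outside S' x Opt).  States outside S' = {s | Val s > 0} are unreachable
   in M' from states of S' since P'(s,a,s') = 0 when Val s' = 0. *)
Definition pruned_tp (M : mdp R S A) Bad (s : S) (a : A) (s' : S) : R :=
  if `[< 0 < Val M Bad s /\ Opt M Bad s a >] then
    tp M s a s' * Val M Bad s' / Val M Bad s
  else 0.

(* strategies of M' = strategies of M playing only Opt actions after every
   finite path *)
Definition is_pruned_strategy (M : mdp R S A) Bad (sigma : strategy) : Prop :=
  is_strategy M sigma /\
  forall s0 h, valid_path M s0 h ->
    forall a, 0 < sigma s0 h a -> Opt M Bad (last_state s0 h) a.

(* E'_{sigma,s}(MP): mean payoff in M' (rewards R' = R on S') *)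
Definition pruned_exp_MP (M : mdp R S A) Bad sigma s : R :=
  exp_MP (pruned_tp M Bad) (rew M) sigma s.

Definition sinks (M : mdp R S A) (Bad : {set S}) : Prop :=
  forall s, s \in Bad -> exists a,
    (forall b, legal M s b = (b == a)) /\ tp M s a s = 1.

End Defs.

From HB Require Import structures.
From mathcomp Require Import all_boot all_order all_algebra.
From mathcomp Require Import all_classical all_reals.
From mathcomp Require Import topology normedtype sequences.
From mathcomp Require Import ring.
Import Order.TTheory GRing.Theory Num.Theory.
Import numFieldNormedType.Exports.
Local Open Scope ring_scope.
Local Open Scope classical_set_scope.
Set Implicit Arguments.
Unset Strict Implicit.
Unset Printing Implicit Defensive.

(* For any strategy, the mean of Val at step n over the paths that avoided Bad
   so far, [safe_mean sigma s0 Val n], starts at Val s0, bounds the probability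
   of avoiding Bad for n steps from below, and is nonincreasing because Val is
   excessive (Bellman: Val s >= sum_s' P(s,a,s') Val s' for s outside Bad).
   Strategies of M' keep it constant, which gives (1).
   Conversely, if sigma is safe-optimal, splitting Pr(Box ~Bad) after n steps
   gives Val s0 = E[1_safe Pr_residual(Box ~Bad)] <= safe_mean sigma s0 Val n
   <= Val s0.  Hence the residual strategy after every reachable safe history
   is safe-optimal and sigma only plays actions of Opt there; patching sigma
   with sigma* elsewhere yields a strategy of M' with the same safe paths.
   Finally Pr'(rho) Val s0 = Pr(rho) 1_safe(rho) Val(last rho) (the factors
   Val s'/Val s telescope) and, for safe-optimal sigma,
   E(Reward_n 1_{Box ~Bad}) = E(Reward_n 1_safe Val(s_n)), so E(MP | Box ~Bad)
   under sigma is E'(MP) under the patched strategy, at most E'(MP) under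
   sigma*. *)

Section FiniteSums.
Variables (V : nmodType) (T : finType).

Lemma sum_pair (T' : finType) (F : T * T' -> V) :
  \sum_(p : T * T') F p = \sum_(x : T) \sum_(y : T') F (x, y).
Proof. by rewrite pair_bigA; apply: eq_bigr => -[]. Qed.

Lemma sum_tuple0 (F : seq T -> V) : \sum_(t : 0.-tuple T) F t = F [::].
Proof. by rewrite (big_pred1 [tuple]) // => t; apply/esym/eqP/tuple0. Qed.

Lemma sum_tuple_cons n (F : seq T -> V) :
  \sum_(t : n.+1.-tuple T) F t = \sum_(x : T) \sum_(t : n.-tuple T) F (x :: t).
Proof.
rewrite pair_bigA (reindex (fun p : T * n.-tuple T => [tuple of p.1 :: p.2])) //=.
exists (fun t => (thead t, [tuple of behead t])) => [[x t] _ | t _].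
  by congr pair; apply: val_inj.
by case/tupleP: t => x t; apply: val_inj.
Qed.

Lemma sum_tuple_rcons n (F : seq T -> V) :
  \sum_(t : n.+1.-tuple T) F t = \sum_(t : n.-tuple T) \sum_(x : T) F (rcons t x).
Proof.
elim: n F => [|n IH] F.
  rewrite sum_tuple_cons (sum_tuple0 (fun t => \sum_x F (rcons t x))).
  by apply: eq_bigr => x _; rewrite (sum_tuple0 (fun t => F (x :: t))).
rewrite sum_tuple_cons (sum_tuple_cons n (fun t => \sum_x F (rcons t x))).
by apply: eq_bigr => x _; rewrite (IH (fun t => F (x :: t))).
Qed.

Lemma sum_tuple_cat n m (F : seq T -> V) :
  \sum_(t : (n + m).-tuple T) F t =
  \sum_(t1 : n.-tuple T) \sum_(t2 : m.-tuple T) F (t1 ++ t2).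
Proof.
elim: n F => [|n IH] F.
  by rewrite (sum_tuple0 (fun t => \sum_(t2 : m.-tuple T) F (t ++ t2))).
rewrite (sum_tuple_cons (n + m)) (sum_tuple_cons n (fun t => \sum_(t2 : m.-tuple T) F (t ++ t2))).
by apply: eq_bigr => x _; rewrite (IH (fun t => F (x :: t))).
Qed.

End FiniteSums.

Section PrunedMDP.
Variables (R : realType) (S A : finType) (M : mdp R S A) (Bad : {set S}).
Implicit Types (P : S -> A -> S -> R) (sigma tau : strategy R S A) (s : S) (a : A)
  (x : A * S) (t h pre l : seq (A * S)) (f : S -> R).
Local Notation pp sigma s0 t := (pathprob (tp M) sigma s0 t).
Local Notation V := (Val M Bad).
Local Notation Pn := (prob_safe_n M Bad).

Lemma cylprob_cat P sigma s0 pre cur l1 l2 :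
  cylprob P sigma s0 pre cur (l1 ++ l2) =
  cylprob P sigma s0 pre cur l1 *
  cylprob P sigma s0 (pre ++ l1) (last cur (unzip2 l1)) l2.
Proof.
elim: l1 pre cur => [|[a s'] l1 IH] pre cur /=; first by rewrite mul1r cats0.
by rewrite IH cat_rcons !mulrA.
Qed.

Lemma pathprob_cat P sigma s0 t1 t2 :
  pathprob P sigma s0 (t1 ++ t2) =
  pathprob P sigma s0 t1 * cylprob P sigma s0 t1 (last_state s0 t1) t2.
Proof. by rewrite /pathprob cylprob_cat. Qed.

Lemma pathprob_rcons P sigma s0 t a s' :
  pathprob P sigma s0 (rcons t (a, s')) =
  pathprob P sigma s0 t * (sigma s0 t a * P (last_state s0 t) a s').
Proof. by rewrite -cats1 pathprob_cat /= mulr1. Qed.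

Lemma cylprob_shift P sigma tau s0 s1 pre0 pre cur l :
  (forall h, sigma s0 (pre0 ++ h) = tau s1 h) ->
  cylprob P sigma s0 (pre0 ++ pre) cur l = cylprob P tau s1 pre cur l.
Proof.
move=> shift; elim: l pre cur => [|[a s'] l IH] pre cur //=.
by rewrite shift rcons_cat IH.
Qed.

Lemma last_state_rcons s t x : last_state s (rcons t x) = x.2.
Proof. by rewrite /last_state /unzip2 map_rcons last_rcons. Qed.

Lemma last_state_cat s t1 t2 :
  last_state s (t1 ++ t2) = last_state (last_state s t1) t2.
Proof. by rewrite /last_state /unzip2 map_cat last_cat. Qed.

Lemma valid_path_cat s t1 t2 :
  valid_path M s (t1 ++ t2) =
  valid_path M s t1 && valid_path M (last_state s t1) t2.
Proof. by elim: t1 s => [|[a s'] t1 IH] s //=; rewrite IH !andbA. Qed.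

Lemma valid_path_rcons s t a s' :
  valid_path M s (rcons t (a, s')) =
  [&& valid_path M s t, legal M (last_state s t) a &
      0 < tp M (last_state s t) a s'].
Proof. by rewrite -cats1 valid_path_cat /= andbT. Qed.

Lemma avoids_cons s x t : avoids Bad s (x :: t) = (s \notin Bad) && avoids Bad x.2 t.
Proof. by []. Qed.

Lemma avoids_last s t : avoids Bad s t -> last_state s t \notin Bad.
Proof.
elim: t s => [|[a s'] t IH] s; first by rewrite /avoids andbT.
by rewrite avoids_cons => /andP[_ /IH].
Qed.

Lemma avoids_cat s t1 t2 :
  avoids Bad s (t1 ++ t2) = avoids Bad s t1 && avoids Bad (last_state s t1) t2.
Proof.
elim: t1 s => [|x t1 IH] s /=; first by rewrite /avoids /= andbT; case: (s \notin Bad).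
by rewrite avoids_cons IH avoids_cons andbA.
Qed.

Lemma avoids_rcons s t x :
  avoids Bad s (rcons t x) = avoids Bad s t && (x.2 \notin Bad).
Proof.
rewrite -cats1 avoids_cat; case: (boolP (avoids Bad s t)) => //= /avoids_last.
by rewrite /avoids /= andbT => ->.
Qed.

Lemma tp_ge0 s a s' : 0 <= tp M s a s'.
Proof.
rewrite /tp; case E: (trans M s a) => [mu|] //.
by have [? _] := trans_dist E.
Qed.

Lemma sum_tp s a : \sum_s' tp M s a s' = (legal M s a)%:R.
Proof.
rewrite /tp /legal; case E: (trans M s a) => [mu|] /=; last by rewrite big1.
by have [_ ->] := trans_dist E.
Qed.

Lemma pathprob_ge0_valid sigma s0 t : is_strategy M sigma ->
  0 <= pp sigma s0 t /\ (pp sigma s0 t != 0 -> valid_path M s0 t).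
Proof.
move=> Hs; elim/last_ind: t => [|t [a s'] [p0 pv]]; first by rewrite /pathprob /= ler01.
rewrite pathprob_rcons valid_path_rcons.
have [->|/pv vt] := eqVneq (pp sigma s0 t) 0; first by rewrite mul0r eqxx.
have [g0 [_ gl]] := Hs s0 t vt.
split; first by rewrite !mulr_ge0 // tp_ge0.
rewrite !mulf_eq0 !negb_or => /andP[_ /andP[sa0 tp0]].
have sa : 0 < sigma s0 t a by rewrite lt_def sa0 g0.
by rewrite vt gl // lt_def tp0 tp_ge0.
Qed.

Lemma sum_strategy_const sigma s0 t c : is_strategy M sigma -> valid_path M s0 t ->
  \sum_a sigma s0 t a * c = c.
Proof. by move=> Hs vt; rewrite -mulr_suml (Hs s0 t vt).2.1 mul1r. Qed.

Definition safe_mean sigma s0 f n :=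
  \sum_(t : n.-tuple (A * S)) pp sigma s0 t * (avoids Bad s0 t)%:R * f (last_state s0 t).

Definition next_mean f s a := \sum_s' tp M s a s' * ((s' \notin Bad)%:R * f s').

Definition excessive f :=
  forall s a, s \notin Bad -> legal M s a -> next_mean f s a <= f s.

Lemma safe_mean0 sigma s0 f : safe_mean sigma s0 f 0 = (s0 \notin Bad)%:R * f s0.
Proof.
rewrite /safe_mean (sum_tuple0 (fun t =>
  pp sigma s0 t * (avoids Bad s0 t)%:R * f (last_state s0 t))).
by rewrite /pathprob /= mul1r /avoids andbT.
Qed.

Lemma safe_mean_succ sigma s0 f n :
  safe_mean sigma s0 f n.+1 =
  \sum_(t : n.-tuple (A * S)) pp sigma s0 t * (avoids Bad s0 t)%:R *
    \sum_a sigma s0 t a * next_mean f (last_state s0 t) a.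
Proof.
rewrite /safe_mean (sum_tuple_rcons n (fun t =>
  pp sigma s0 t * (avoids Bad s0 t)%:R * f (last_state s0 t))); apply: eq_bigr => t _.
rewrite sum_pair mulr_sumr; apply: eq_bigr => a _.
rewrite /next_mean !mulr_sumr; apply: eq_bigr => s' _.
by rewrite pathprob_rcons avoids_rcons last_state_rcons -mulnb natrM /=; ring.
Qed.

Lemma safe_mean_gap sigma s0 f n : is_strategy M sigma ->
  safe_mean sigma s0 f n - safe_mean sigma s0 f n.+1 =
  \sum_(t : n.-tuple (A * S)) pp sigma s0 t * (avoids Bad s0 t)%:R *
    \sum_a sigma s0 t a * (f (last_state s0 t) - next_mean f (last_state s0 t) a).
Proof.
move=> Hs; rewrite safe_mean_succ -sumrB; apply: eq_bigr => t _.
have [_ pv] := pathprob_ge0_valid s0 t Hs.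
have [->|/pv vt] := eqVneq (pp sigma s0 t) 0; first by rewrite !mul0r subrr.
rewrite -mulrBr -[X in X - _](sum_strategy_const (f (last_state s0 t)) Hs vt) -sumrB.
by congr (_ * _); apply: eq_bigr => a _; rewrite mulrBr.
Qed.

Lemma strategy_gap_ge0 sigma s0 f t a : excessive f -> is_strategy M sigma ->
  valid_path M s0 t -> avoids Bad s0 t ->
  0 <= sigma s0 t a * (f (last_state s0 t) - next_mean f (last_state s0 t) a).
Proof.
move=> Hf Hs vt av; have [g0 [_ gl]] := Hs s0 t vt.
have [->|na] := eqVneq (sigma s0 t a) 0; first by rewrite mul0r.
by rewrite mulr_ge0 // subr_ge0 Hf ?avoids_last ?gl // lt_def na g0.
Qed.

Lemma safe_mean_gap_term_ge0 sigma s0 f t : excessive f -> is_strategy M sigma ->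
  0 <= pp sigma s0 t * (avoids Bad s0 t)%:R *
    \sum_a sigma s0 t a * (f (last_state s0 t) - next_mean f (last_state s0 t) a).
Proof.
move=> Hf Hs; have [p0 pv] := pathprob_ge0_valid s0 t Hs.
have [->|/pv vt] := eqVneq (pp sigma s0 t) 0; first by rewrite !mul0r.
case: (boolP (avoids Bad s0 t)) => av; last by rewrite mulr0 mul0r.
by rewrite !mulr_ge0 // sumr_ge0 // => a _; apply: strategy_gap_ge0.
Qed.

Lemma nonincreasing_safe_mean sigma s0 f : excessive f -> is_strategy M sigma ->
  nonincreasing_seq (safe_mean sigma s0 f).
Proof.
move=> Hf Hs; apply/nonincreasing_seqP => n; rewrite -subr_ge0 safe_mean_gap //.
by apply: sumr_ge0 => t _; apply: safe_mean_gap_term_ge0.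
Qed.

Lemma safe_mean_stable_next_mean sigma s0 f n (t : n.-tuple (A * S)) a :
  excessive f -> is_strategy M sigma ->
  safe_mean sigma s0 f n.+1 = safe_mean sigma s0 f n ->
  pp sigma s0 t != 0 -> avoids Bad s0 t -> 0 < sigma s0 t a ->
  next_mean f (last_state s0 t) a = f (last_state s0 t).
Proof.
move=> Hf Hs stable nz av sa.
have vt : valid_path M s0 t by apply: (pathprob_ge0_valid s0 t Hs).2.
have := safe_mean_gap s0 f n Hs; rewrite stable subrr => /esym gap0.
have term_ge0 (t' : n.-tuple (A * S)) (_ : true) := safe_mean_gap_term_ge0 s0 t' Hf Hs.
have /eqP := @psumr_eq0P _ _ _ _ term_ge0 gap0 t isT.
rewrite !mulf_eq0 (negbTE nz) av oner_eq0 /= => /eqP inner0.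
have /eqP := @psumr_eq0P _ _ _ _ (fun b _ => strategy_gap_ge0 b Hf Hs vt av) inner0 a isT.
by rewrite mulf_eq0 (gt_eqF sa) subr_eq0 => /eqP.
Qed.

Lemma safe_mean_const sigma s0 f : is_strategy M sigma ->
  (forall t a, valid_path M s0 t -> avoids Bad s0 t -> 0 < sigma s0 t a ->
     next_mean f (last_state s0 t) a = f (last_state s0 t)) ->
  forall n, safe_mean sigma s0 f n = (s0 \notin Bad)%:R * f s0.
Proof.
move=> Hs stable; elim=> [|n IH]; first exact: safe_mean0.
apply/eqP; rewrite -IH eq_sym -subr_eq0 safe_mean_gap // big1 // => t _.
have [_ pv] := pathprob_ge0_valid s0 t Hs.
have [->|/pv vt] := eqVneq (pp sigma s0 t) 0; first by rewrite !mul0r.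
case: (boolP (avoids Bad s0 t)) => av; last by rewrite mulr0 mul0r.
rewrite big1 ?mulr0 // => a _; have [g0 _] := Hs s0 t vt.
have [->|na] := eqVneq (sigma s0 t a) 0; first by rewrite mul0r.
by rewrite stable ?subrr ?mulr0 // lt_def na g0.
Qed.

Lemma prob_safe_nE sigma s0 n : Pn sigma s0 n = safe_mean sigma s0 (fun=> 1) n.
Proof. by apply: eq_bigr => t _; rewrite /= mulr1. Qed.

Lemma excessive1 : excessive (fun=> 1).
Proof.
move=> s a _ la; apply: (@le_trans _ _ (\sum_s' tp M s a s')); last by rewrite sum_tp la.
by apply: ler_sum => s' _; rewrite mulr1 ler_piMr ?tp_ge0 // lern1 leq_b1.
Qed.

Lemma prob_safe_n_ge0 sigma s0 n : is_strategy M sigma -> 0 <= Pn sigma s0 n.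
Proof.
move=> Hs; apply: sumr_ge0 => t _.
by rewrite mulr_ge0 // (pathprob_ge0_valid s0 t Hs).1.
Qed.

Lemma nonincreasing_prob_safe_n sigma s0 : is_strategy M sigma ->
  nonincreasing_seq (Pn sigma s0).
Proof.
move=> Hs; rewrite (funext (prob_safe_nE sigma s0)).
exact: nonincreasing_safe_mean excessive1 Hs.
Qed.

Lemma is_cvg_prob_safe_n sigma s0 : is_strategy M sigma -> cvgn (Pn sigma s0).
Proof.
move=> Hs; apply: nonincreasing_is_cvgn; first exact: nonincreasing_prob_safe_n.
by exists 0 => _ [n _ <-]; apply: prob_safe_n_ge0.
Qed.

Lemma prob_safe_le_n sigma s0 n : is_strategy M sigma ->
  prob_safe M Bad sigma s0 <= Pn sigma s0 n.
Proof.
move=> Hs; apply: nonincreasing_cvgn_ge; first exact: nonincreasing_prob_safe_n.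
exact: is_cvg_prob_safe_n.
Qed.

Lemma prob_safe_ge0 sigma s0 : is_strategy M sigma -> 0 <= prob_safe M Bad sigma s0.
Proof.
move=> Hs; apply: limr_ge; first exact: is_cvg_prob_safe_n.
by apply: nearW => n; exact: prob_safe_n_ge0.
Qed.

Lemma prob_safe_le_notin_Bad sigma s0 : is_strategy M sigma ->
  prob_safe M Bad sigma s0 <= (s0 \notin Bad)%:R.
Proof.
by move=> Hs; rewrite (le_trans (prob_safe_le_n s0 0 Hs)) // prob_safe_nE safe_mean0 mulr1.
Qed.

Section Value.
Hypothesis has_strategy : exists sigma, is_strategy M sigma.

Lemma Val_has_sup s : has_sup [set prob_safe M Bad sigma s | sigma in is_strategy M].
Proof.
have [sigma Hs] := has_strategy.
split; first by exists (prob_safe M Bad sigma s), sigma.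
exists 1 => _ [tau Ht <-].
by rewrite (le_trans (prob_safe_le_notin_Bad s Ht)) // lern1 leq_b1.
Qed.

Lemma prob_safe_le_Val sigma s : is_strategy M sigma -> prob_safe M Bad sigma s <= V s.
Proof. by move=> Hs; apply: sup_upper_bound; [exact: Val_has_sup | exists sigma]. Qed.

Lemma Val_ge0 s : 0 <= V s.
Proof.
have [sigma Hs] := has_strategy.
exact: le_trans (prob_safe_ge0 s Hs) (prob_safe_le_Val s Hs).
Qed.

Lemma Val_le_notin_Bad s : V s <= (s \notin Bad)%:R.
Proof.
apply: ge_sup; first by case: (Val_has_sup s).
by move=> _ [sigma Hs <-]; exact: prob_safe_le_notin_Bad.
Qed.

Lemma Val_le1 s : V s <= 1.
Proof. by rewrite (le_trans (Val_le_notin_Bad s)) // lern1 leq_b1. Qed.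

Lemma notin_Bad_mulVal s : (s \notin Bad)%:R * V s = V s.
Proof.
case: (boolP (s \in Bad)) => sB /=; last by rewrite mul1r.
rewrite mul0r; apply/esym/eqP; rewrite eq_le Val_ge0 andbT.
by have := Val_le_notin_Bad s; rewrite sB.
Qed.

Definition play_then s a (next : S -> strategy R S A) : strategy R S A :=
  fun s1 h => match h with
  | [::] => if s1 == s then fun b => (b == a)%:R else next s1 s1 [::]
  | (_, s2) :: h' => next s2 s2 h'
  end.

Lemma play_then_strategy s a next : legal M s a ->
  (forall s', is_strategy M (next s')) -> is_strategy M (play_then s a next).
Proof.
move=> la Hn s1 [|[b s2] h] /= vh; last by case/and3P: vh => _ _; exact: Hn.
case: eqP => [->|_]; last exact: Hn.
split=> [b|]; first by rewrite ler0n.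
split=> [|b]; last by rewrite ltr0n lt0b => /eqP ->.
by rewrite (bigD1 a) //= eqxx big1 ?addr0 // => b /negbTE ->.
Qed.

Lemma prob_safe_n_play_then s a next k : s \notin Bad ->
  Pn (play_then s a next) s k.+1 = \sum_s' tp M s a s' * Pn (next s') s' k.
Proof.
move=> sB; rewrite /prob_safe_n (sum_tuple_cons k (fun t =>
  pp (play_then s a next) s t * (avoids Bad s t)%:R)) sum_pair.
rewrite (bigD1 a) //= [X in _ + X]big1 ?addr0 => [|b /negbTE ba]; last first.
  by apply: big1 => s' _; apply: big1 => t _; rewrite /pathprob /= eqxx ba !mul0r.
apply: eq_bigr => s' _; rewrite mulr_sumr; apply: eq_bigr => t _.
have shift h : play_then s a next s ([:: (a, s')] ++ h) = next s' s' h by [].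
have := cylprob_shift (tp M) [::] s' t shift; rewrite cats0 => cyl_next.
by rewrite /pathprob /= cyl_next !eqxx avoids_cons sB mul1r !mulrA.
Qed.

Lemma Val_bellman s a : s \notin Bad -> legal M s a ->
  \sum_s' tp M s a s' * V s' <= V s.
Proof.
move=> sB la; apply/ler_addgt0Pr => e e0.
have /choice [next Hnext] : forall s', exists sigma,
    is_strategy M sigma /\ V s' - e < prob_safe M Bad sigma s'.
  by move=> s'; have [_ [sigma Hs <-] lt] := sup_adherent e0 (Val_has_sup s'); exists sigma.
have Hp := play_then_strategy la (fun s' => (Hnext s').1).
have tp1 : \sum_s' tp M s a s' = 1 by rewrite sum_tp la.
have expand : \sum_s' tp M s a s' * (V s' - e) = \sum_s' tp M s a s' * V s' - e.
  by under eq_bigr do rewrite mulrBr; rewrite sumrB -mulr_suml tp1 mul1r.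
rewrite -lerBlDr -expand.
apply: le_trans (prob_safe_le_Val s Hp); apply: limr_ge; first exact: is_cvg_prob_safe_n.
apply: nearW => -[|k].
  rewrite prob_safe_nE safe_mean0 sB mulr1 -tp1; apply: ler_sum => s' _.
  by rewrite ler_piMr ?tp_ge0 // lerBlDr (le_trans (Val_le1 s')) // lerDl ltW.
rewrite prob_safe_n_play_then //; apply: ler_sum => s' _; rewrite ler_wpM2l ?tp_ge0 //.
have [Hs lt] := Hnext s'.
exact: le_trans (ltW lt) (prob_safe_le_n s' k Hs).
Qed.

Lemma next_mean_Val s a : next_mean V s a = \sum_s' tp M s a s' * V s'.
Proof. by apply: eq_bigr => s' _; rewrite notin_Bad_mulVal. Qed.

Lemma excessive_Val : excessive V.
Proof. by move=> s a sB la; rewrite next_mean_Val Val_bellman. Qed.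

Lemma safe_mean_Val0 sigma s0 : safe_mean sigma s0 V 0 = V s0.
Proof. by rewrite safe_mean0 notin_Bad_mulVal. Qed.

Lemma safe_mean_Val_le_prob_safe_n sigma s0 n : is_strategy M sigma ->
  safe_mean sigma s0 V n <= Pn sigma s0 n.
Proof.
move=> Hs; rewrite prob_safe_nE; apply: ler_sum => t _; rewrite ler_wpM2l ?Val_le1 //.
by rewrite mulr_ge0 // (pathprob_ge0_valid s0 t Hs).1.
Qed.

Lemma safe_mean_Val_pruned sigma s0 n : is_pruned_strategy M Bad sigma ->
  safe_mean sigma s0 V n = V s0.
Proof.
move=> [Hs Hopt]; rewrite safe_mean_const ?notin_Bad_mulVal // => t a vt _ sa.
by rewrite next_mean_Val; case: (Hopt s0 t vt a sa).
Qed.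

Lemma prob_safe_pruned sigma s0 : is_pruned_strategy M Bad sigma ->
  prob_safe M Bad sigma s0 = V s0.
Proof.
move=> Hp; have Hs := Hp.1.
apply/eqP; rewrite eq_le prob_safe_le_Val //=.
apply: limr_ge; first exact: is_cvg_prob_safe_n.
apply: nearW => n; rewrite -(safe_mean_Val_pruned s0 n Hp).
exact: safe_mean_Val_le_prob_safe_n.
Qed.

Section Residual.
Variables (s0 : S) (sigma : strategy R S A).
Hypothesis Hs : is_strategy M sigma.

Definition residual t : strategy R S A := fun s h =>
  if s == last_state s0 t then sigma s0 (t ++ h) else sigma s h.

Lemma residual_strategy t : valid_path M s0 t -> is_strategy M (residual t).
Proof.
move=> vt s h vh; rewrite /residual; case: eqP => [E|_]; last exact: Hs.
subst s; have vth : valid_path M s0 (t ++ h) by rewrite valid_path_cat vt.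
by have := Hs vth; rewrite last_state_cat.
Qed.

Lemma safe_sum_split n m (g : seq (A * S) -> R) :
  \sum_(t : (n + m).-tuple (A * S)) pp sigma s0 t * g (take n t) * (avoids Bad s0 t)%:R =
  \sum_(t : n.-tuple (A * S)) pp sigma s0 t * g t * (avoids Bad s0 t)%:R *
    Pn (residual t) (last_state s0 t) m.
Proof.
rewrite (sum_tuple_cat n m (fun t => pp sigma s0 t * g (take n t) * (avoids Bad s0 t)%:R)).
apply: eq_bigr => t _; rewrite /prob_safe_n mulr_sumr; apply: eq_bigr => t' _.
have shift h : sigma s0 (t ++ h) = residual t (last_state s0 t) h by rewrite /residual eqxx.
have := cylprob_shift (tp M) [::] (last_state s0 t) t' shift; rewrite cats0 => cyl_residual.
rewrite take_size_cat ?size_tuple // pathprob_cat cyl_residual avoids_cat -mulnb natrM.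
by rewrite /pathprob; ring.
Qed.

Lemma safe_sum_split_cvg n (g : seq (A * S) -> R) :
  (fun m => \sum_(t : (n + m).-tuple (A * S))
     pp sigma s0 t * g (take n t) * (avoids Bad s0 t)%:R) @ \oo -->
  \sum_(t : n.-tuple (A * S)) pp sigma s0 t * g t * (avoids Bad s0 t)%:R *
    prob_safe M Bad (residual t) (last_state s0 t).
Proof.
rewrite (funext (fun m => safe_sum_split n m g)).
apply: cvg_big => [|t _]; first exact: add_continuous.
have [_ pv] := pathprob_ge0_valid s0 t Hs.
have [->|/pv vt] := eqVneq (pp sigma s0 t) 0.
  by rewrite !mul0r; under eq_cvg do rewrite !mul0r; exact: cvg_cst.
by apply: cvgMl_tmp; exact/is_cvg_prob_safe_n/residual_strategy.
Qed.

Lemma prob_safe_split n :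
  prob_safe M Bad sigma s0 =
  \sum_(t : n.-tuple (A * S)) pp sigma s0 t * (avoids Bad s0 t)%:R *
    prob_safe M Bad (residual t) (last_state s0 t).
Proof.
have Pn_shift : (fun m => \sum_(t : (n + m).-tuple (A * S))
    pp sigma s0 t * 1 * (avoids Bad s0 t)%:R) @ \oo --> prob_safe M Bad sigma s0.
  rewrite (_ : (fun m => _) = (fun m => Pn sigma s0 (m + n))).
    by rewrite cvg_shiftn; exact: is_cvg_prob_safe_n.
  by apply: funext => m; rewrite /prob_safe_n addnC; apply: eq_bigr => t _; rewrite mulr1.
rewrite (cvg_unique _ Pn_shift (@safe_sum_split_cvg n (fun=> 1))) //.
by apply: eq_bigr => t _; rewrite mulr1.
Qed.

Hypothesis opt : prob_safe M Bad sigma s0 = V s0.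

Lemma safe_mean_Val_opt n : safe_mean sigma s0 V n = V s0.
Proof.
apply/eqP; rewrite eq_le -{1}(safe_mean_Val0 sigma s0).
rewrite (nonincreasing_safe_mean s0 excessive_Val Hs (leq0n n)) /=.
rewrite -{1}opt (prob_safe_split n); apply: ler_sum => t _.
have [p0 pv] := pathprob_ge0_valid s0 t Hs.
have [->|/pv vt] := eqVneq (pp sigma s0 t) 0; first by rewrite !mul0r.
rewrite ler_wpM2l ?mulr_ge0 //.
exact/prob_safe_le_Val/residual_strategy.
Qed.

Lemma residual_prob_safe_opt n (t : n.-tuple (A * S)) :
  pp sigma s0 t != 0 -> avoids Bad s0 t ->
  prob_safe M Bad (residual t) (last_state s0 t) = V (last_state s0 t).
Proof.
move=> nz av.
have gap0 : \sum_(t' : n.-tuple (A * S)) pp sigma s0 t' * (avoids Bad s0 t')%:R *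
    (V (last_state s0 t') - prob_safe M Bad (residual t') (last_state s0 t')) = 0.
  under eq_bigr do rewrite mulrBr.
  rewrite sumrB -prob_safe_split opt.
  by rewrite -(safe_mean_Val_opt n) subrr.
have gap_ge0 (t' : n.-tuple (A * S)) : true ->
    0 <= pp sigma s0 t' * (avoids Bad s0 t')%:R *
         (V (last_state s0 t') - prob_safe M Bad (residual t') (last_state s0 t')).
  move=> _; have [p0 pv] := pathprob_ge0_valid s0 t' Hs.
  have [->|/pv vt] := eqVneq (pp sigma s0 t') 0; first by rewrite !mul0r.
  by rewrite !mulr_ge0 // subr_ge0; exact/prob_safe_le_Val/residual_strategy.
have /eqP := @psumr_eq0P _ _ _ _ gap_ge0 gap0 t isT.
by rewrite !mulf_eq0 (negbTE nz) av oner_eq0 /= subr_eq0 => /eqP.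
Qed.

Lemma opt_strategy_plays_Opt t a : pp sigma s0 t != 0 -> avoids Bad s0 t ->
  0 < sigma s0 t a -> Opt M Bad (last_state s0 t) a.
Proof.
move=> nz av sa; have vt := (pathprob_ge0_valid s0 t Hs).2 nz.
split; first by have [_ [_ gl]] := Hs vt; exact: gl.
rewrite -next_mean_Val; apply/esym.
apply: (@safe_mean_stable_next_mean sigma s0 V (size t) (in_tuple t)) => //.
  exact: excessive_Val.
by rewrite !safe_mean_Val_opt.
Qed.

Lemma exp_reward_safeE n :
  exp_reward_safe M Bad sigma s0 n =
  \sum_(t : n.-tuple (A * S)) pp sigma s0 t * reward_along (rew M) s0 t *
    (avoids Bad s0 t)%:R * V (last_state s0 t).
Proof.
rewrite /exp_reward_safe (cvg_lim _ (@safe_sum_split_cvg n (reward_along (rew M) s0))) //.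
apply: eq_bigr => t _.
have [->|nz] := eqVneq (pp sigma s0 t) 0; first by rewrite !mul0r.
case: (boolP (avoids Bad s0 t)) => av; last by rewrite !mulr0 !mul0r.
by rewrite residual_prob_safe_opt.
Qed.

End Residual.

Lemma pruned_tp_mulVal s a s' : Opt M Bad s a ->
  pruned_tp M Bad s a s' * V s = tp M s a s' * V s'.
Proof.
move=> Ho; rewrite /pruned_tp; case: asboolP => [[Vpos _]|not_pos].
  by rewrite divfK // gt_eqF.
have V0 : V s = 0.
  by apply/eqP; rewrite eq_le Val_ge0 andbT leNgt; apply/negP => Vpos; apply: not_pos.
have tpV_ge0 s1 : true -> 0 <= tp M s a s1 * V s1 by rewrite mulr_ge0 ?tp_ge0 ?Val_ge0.
case: Ho => _ optE; rewrite mul0r.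
by rewrite (@psumr_eq0P _ _ _ _ tpV_ge0 _ s' isT) // -optE.
Qed.

Lemma pruned_pathprob_mulVal sigma s0 t : is_pruned_strategy M Bad sigma ->
  pathprob (pruned_tp M Bad) sigma s0 t * V s0 =
  pp sigma s0 t * (avoids Bad s0 t)%:R * V (last_state s0 t).
Proof.
move=> [Hs Hp]; elim/last_ind: t => [|t [a s'] IH].
  by rewrite /pathprob /= !mul1r /avoids andbT notin_Bad_mulVal.
rewrite !pathprob_rcons last_state_rcons avoids_rcons mulrAC IH -mulnb natrM.
have [_ pv] := pathprob_ge0_valid s0 t Hs.
have [->|/pv vt] := eqVneq (pp sigma s0 t) 0; first by rewrite !mul0r.
have [g0 _] := Hs s0 t vt.
have [->|na] := eqVneq (sigma s0 t a) 0; first by rewrite !(mul0r, mulr0).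
have Ho : Opt M Bad (last_state s0 t) a by apply: (Hp _ _ vt); rewrite lt_def na g0.
have step := pruned_tp_mulVal s' Ho; rewrite -(notin_Bad_mulVal s') in step.
transitivity (pp sigma s0 t * (avoids Bad s0 t)%:R * sigma s0 t a *
  (pruned_tp M Bad (last_state s0 t) a s' * V (last_state s0 t))); first by ring.
by rewrite step /=; ring.
Qed.

Definition patch sigma tau s0 : strategy R S A := fun s h =>
  if (s == s0) && (pp sigma s0 h != 0) && avoids Bad s0 h then sigma s0 h else tau s h.

Lemma patch_pruned sigma tau s0 : is_strategy M sigma ->
  prob_safe M Bad sigma s0 = V s0 -> is_pruned_strategy M Bad tau ->
  is_pruned_strategy M Bad (patch sigma tau s0).
Proof.
move=> Hs opt [Ht Htopt]; split=> s h; rewrite /patch;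
  case: ifP => [/andP[/andP[/eqP-> nz] av]|_] vh.
- exact: Hs.
- exact: Ht.
- by move=> a; apply: opt_strategy_plays_Opt.
- exact: Htopt.
Qed.

Lemma safe_pathprob_patch sigma tau s0 t :
  pp (patch sigma tau s0) s0 t * (avoids Bad s0 t)%:R = pp sigma s0 t * (avoids Bad s0 t)%:R.
Proof.
elim/last_ind: t => [|t [a s'] IH] //.
rewrite !pathprob_rcons avoids_rcons -mulnb natrM.
case: (boolP (avoids Bad s0 t)) => av; last by rewrite !(mulr0, mul0r).
move: IH; rewrite av !mulr1 => IH.
have [E|nz] := eqVneq (pp sigma s0 t) 0; first by rewrite IH E !mul0r.
by rewrite IH /patch eqxx nz av.
Qed.

Lemma cond_MP_pruned sigma tau s0 : 0 < V s0 -> is_strategy M sigma ->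
  prob_safe M Bad sigma s0 = V s0 -> is_pruned_strategy M Bad tau ->
  (forall t, pp tau s0 t * (avoids Bad s0 t)%:R = pp sigma s0 t * (avoids Bad s0 t)%:R) ->
  cond_MP M Bad sigma s0 = pruned_exp_MP M Bad tau s0.
Proof.
move=> V0 Hs opt Ht same.
rewrite /cond_MP /pruned_exp_MP /exp_MP; congr limn_inf; apply: funext => n.
rewrite (exp_reward_safeE Hs opt) opt -mulrA; congr (_ * _).
rewrite /exp_reward mulr_suml; apply: eq_bigr => t _.
rewrite -(mulfK (lt0r_neq0 V0) (pathprob (pruned_tp M Bad) tau s0 t)).
rewrite pruned_pathprob_mulVal // same.
by field; rewrite gt_eqF.
Qed.

End Value.
End PrunedMDP.

Theorem theorem3 (R : realType) (S A : finType) (M : mdp R S A)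
    (Bad : {set S}) (s0 : S) (sigma_star : strategy R S A) :
  sinks M Bad ->
  0 < Val M Bad s0 ->
  is_pruned_strategy M Bad sigma_star ->
  (forall sigma, is_pruned_strategy M Bad sigma ->
     pruned_exp_MP M Bad sigma s0 <= pruned_exp_MP M Bad sigma_star s0) ->
  prob_safe M Bad sigma_star s0 = Val M Bad s0 /\
  (forall sigma, opt_safe_strategies M Bad s0 sigma ->
     cond_MP M Bad sigma s0 <= cond_MP M Bad sigma_star s0).
Proof.
(* [avoids] inspects every state of a path, so Bad need not be absorbing. *)
move=> _ V0 star_pruned star_max.
have has_strategy : exists sigma, is_strategy M sigma.
  by exists sigma_star; case: star_pruned.
have star_opt := prob_safe_pruned has_strategy s0 star_pruned.
split=> // sigma [Hs opt].
have patched := patch_pruned has_strategy Hs opt star_pruned.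
have same_safe_paths := safe_pathprob_patch M Bad sigma sigma_star s0.
rewrite (cond_MP_pruned has_strategy V0 Hs opt patched same_safe_paths).
rewrite (cond_MP_pruned has_strategy V0 star_pruned.1 star_opt star_pruned (fun _ => erefl)).
exact: star_max.
Qed.
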